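(* Let $R$ be a ring and let $\gamma_1,\gamma_2$ be bijections of $\mathbb{P}(R)$ each induced by a semilinear bijection of $R^2$. If $\gamma_1$ and $\gamma_2$ coincide on all points of some connected component $C$ of $\mathbb{P}(R)$, then $\gamma_1=\gamma_2$.
   Context: $R$ is an associative ring with unit element $1$; $R^*$ denotes its group of units and $\mathrm{GL}_2(R)$ the group of invertible $2\times2$ matrices over $R$. A pair $(a,b)\in R^2$ is admissible if it is the first row of some matrix in $\mathrm{GL}_2(R)$. The projective line $\mathbb{P}(R)$ is the set of all cyclic submodules $R(a,b)$ of the left $R$-module $R^2$ with $(a,b)$ admissible. Two points $R(a,b)$, $R(c,d)$ are distant iff $\begin{pmatrix}a&b\\c&d\end{pmatrix}\in\mathrm{GL}_2(R)$; connected components refer to the graph on $\mathbb{P}(R)$ whose edges are the pairs of distant points. A semilinear bijection of $R^2$ is a bijective additive map $f:R^2\to R^2$ for which there is a ring automorphism $\zeta$ of $R$ with $f(rv)=r^\zeta f(v)$ for all $r\in R$, $v\in R^2$; a bijection $\gamma$ of $\mathbb{P}(R)$ is induced by $f$ if $p^\gamma=f(p)$ for all $p\in\mathbb{P}(R)$. *)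

From HB Require Import structures.
From mathcomp Require Import all_boot all_order all_algebra.
Set Implicit Arguments. Unset Strict Implicit. Unset Printing Implicit Defensive.
Import GRing.Theory.
Local Open Scope ring_scope.

Section ProjLine.
Variable R : pzRingType.

Definition vec := (R * R)%type.
Definition vadd (u v : vec) : vec := (u.1 + v.1, u.2 + v.2).
Definition vscale (r : R) (v : vec) : vec := (r * v.1, r * v.2).

Definition mx2 (a b c d : R) : 'M[R]_2 :=
  \matrix_(i < 2, j < 2)
    if i == 0 then (if j == 0 then a else b) else (if j == 0 then c else d).

Definition inGL2 (M : 'M[R]_2) : Prop :=
  exists N : 'M[R]_2, M *m N = 1%:M /\ N *m M = 1%:M.

Definition admissible (a b : R) : Prop := exists c d, inGL2 (mx2 a b c d).

Definition vset := vec -> Prop.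

Definition cyc (a b : R) : vset := fun v => exists r : R, v = vscale r (a, b).

Definition is_point (p : vset) : Prop := exists a b, admissible a b /\ p = cyc a b.

Definition distant (p q : vset) : Prop :=
  exists a b c d, p = cyc a b /\ q = cyc c d /\ inGL2 (mx2 a b c d).

Inductive connected (p : vset) : vset -> Prop :=
  | conn_refl : is_point p -> connected p p
  | conn_step q s : connected p q -> is_point s -> distant q s -> connected p s.

Definition is_component (C : vset -> Prop) : Prop :=
  exists p0, is_point p0 /\ forall q, C q <-> connected p0 q.

Definition ring_aut (z : R -> R) : Prop :=
  bijective z /\ (forall x y, z (x + y) = z x + z y) /\
  (forall x y, z (x * y) = z x * z y) /\ z 1 = 1.

Definition semilinear_bij (f : vec -> vec) : Prop :=
  bijective f /\ (forall u v, f (vadd u v) = vadd (f u) (f v)) /\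
  exists z, ring_aut z /\ forall r v, f (vscale r v) = vscale (z r) (f v).

Definition image (f : vec -> vec) (p : vset) : vset := fun w => exists v, p v /\ w = f v.

Definition bij_points (g : vset -> vset) : Prop :=
  (forall p, is_point p -> is_point (g p)) /\
  (forall p q, is_point p -> is_point q -> g p = g q -> p = q) /\
  (forall q, is_point q -> exists p, is_point p /\ g p = q).

Definition induced_by (g : vset -> vset) (f : vec -> vec) : Prop :=
  forall p, is_point p -> g p = image f p.

End ProjLine.

(* Write g_i = (f_i)_* for semilinear bijections f_1, f_2 of R^2 and put
   h := f_2^{-1} o f_1, which is again additive and semilinear with respect
   to an automorphism fixing 1.  Then g_1 p = g_2 p iff h fixes the
   submodule p.  Pick a point p0 = R(a,b) of the component together with a
   complement (c,d) making mx2 a b c d invertible; the rows (a,b), (c,d)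
   form a basis of R^2, and every R(x a + c, x b + d) is a point distant
   from p0, hence lies in the component.  An additive semilinear map fixing
   R(a,b) and all the R(x a + c, x b + d) is multiplication by a scalar
   with a right inverse (Lemma [fixed_neighbours_scalar]); such a map fixes
   every cyclic submodule, so g_1 and g_2 agree on every point. *)
From Pilot Require Import Defs.
From Stdlib Require Import FunctionalExtensionality PropExtensionality.
From HB Require Import structures.
From mathcomp Require Import all_boot all_order all_algebra.
Set Implicit Arguments. Unset Strict Implicit. Unset Printing Implicit Defensive.
Import GRing.Theory.
Local Open Scope ring_scope.

Section ProjectiveLine.
Variable R : pzRingType.
Implicit Types (a b c d s t x r : R) (A B : 'M[R]_2) (p : vset R).

Lemma mx2_mul a b c d a' b' c' d' :
  mx2 a b c d *m mx2 a' b' c' d' =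
  mx2 (a*a' + b*c') (a*b' + b*d') (c*a' + d*c') (c*b' + d*d').
Proof.
apply/matrixP => i j; rewrite !mxE big_ord_recr big_ord_recr big_ord0 /= add0r !mxE.
by case: i => [[|[|k]] Hi]; case: j => [[|[|l]] Hj].
Qed.

Lemma mx2_1 : (1%:M : 'M[R]_2) = mx2 1 0 0 1.
Proof.
apply/matrixP => i j; rewrite !mxE.
by case: i => [[|[|k]] Hi]; case: j => [[|[|l]] Hj].
Qed.

Lemma mx2_eta A : A = mx2 (A 0 0) (A 0 1) (A 1 0) (A 1 1).
Proof.
apply/matrixP => i j; rewrite !mxE.
case: i => [[|[|k]] Hi]; case: j => [[|[|l]] Hj] //=; congr (A _ _); exact: val_inj.
Qed.

Lemma mx2_inj a b c d a' b' c' d' :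
  mx2 a b c d = mx2 a' b' c' d' -> [/\ a = a', b = b', c = c' & d = d'].
Proof.
move=> E; have entry i j := congr1 (fun A : 'M[R]_2 => A i j) E.
by move: (entry 0 0) (entry 0 1) (entry 1 0) (entry 1 1); rewrite /= !mxE.
Qed.

Lemma inGL2_mul A B : inGL2 A -> inGL2 B -> inGL2 (A *m B).
Proof.
move=> [NA [HA1 HA2]] [NB [HB1 HB2]]; exists (NB *m NA); split.
  by rewrite mulmxA -(mulmxA A) HB1 mulmx1 HA1.
by rewrite mulmxA -(mulmxA NB) HA2 mulmx1 HB2.
Qed.

(* The elementary matrices used to move from a point to its neighbours. *)
Lemma inGL2_transvection x : inGL2 (mx2 1 0 x 1).
Proof.
exists (mx2 1 0 (-x) 1); rewrite !mx2_mul mx2_1.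
by split; congr mx2; rewrite ?mul1r ?mulr1 ?mul0r ?mulr0 ?addr0 ?add0r ?addrN ?addNr.
Qed.

Lemma inGL2_swap_shift x : inGL2 (mx2 x 1 1 0).
Proof.
exists (mx2 0 1 1 (-x)); rewrite !mx2_mul mx2_1.
by split; congr mx2; rewrite ?mul1r ?mulr1 ?mul0r ?mulr0 ?addr0 ?add0r ?mulrN ?addrN.
Qed.

Definition comb a b c d s t : vec R := (s*a + t*c, s*b + t*d).

Lemma vscale_comb a b c d r s t : vscale r (comb a b c d s t) = comb a b c d (r*s) (r*t).
Proof. by rewrite /vscale /comb /= !mulrDr !mulrA. Qed.

Lemma vadd_comb a b c d s t s' t' :
  vadd (comb a b c d s t) (comb a b c d s' t') = comb a b c d (s + s') (t + t').
Proof. by rewrite /vadd /comb /= !mulrDl addrACA [X in (_, X)]addrACA. Qed.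

Lemma inGL2_rows_basis a b c d : inGL2 (mx2 a b c d) ->
  (forall s t, s*a + t*c = 0 -> s*b + t*d = 0 -> s = 0 /\ t = 0) /\
  (forall v : vec R, exists s t, v = comb a b c d s t).
Proof.
case=> N; rewrite (mx2_eta N) !mx2_mul mx2_1 => -[/mx2_inj[e1 e2 e3 e4] /mx2_inj[e1' e2' e3' e4']].
split=> [s t E1 E2|[v1 v2]].
  split.
    have -> : s = (s*a + t*c) * N 0 0 + (s*b + t*d) * N 1 0.
      by rewrite !mulrDl -!mulrA addrACA -!mulrDr e1 e3 mulr1 mulr0 addr0.
    by rewrite E1 E2 !mul0r addr0.
  have -> : t = (s*a + t*c) * N 0 1 + (s*b + t*d) * N 1 1.
    by rewrite !mulrDl -!mulrA addrACA -!mulrDr e2 e4 mulr1 mulr0 add0r.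
  by rewrite E1 E2 !mul0r addr0.
exists (v1 * N 0 0 + v2 * N 1 0), (v1 * N 0 1 + v2 * N 1 1); congr pair.
  by rewrite !mulrDl -!mulrA addrACA -!mulrDr e1' e3' mulr1 mulr0 addr0.
by rewrite !mulrDl -!mulrA addrACA -!mulrDr e2' e4' mulr0 mulr1 add0r.
Qed.

Lemma neighbour_point a b c d x : inGL2 (mx2 a b c d) ->
  is_point (cyc (x*a + c) (x*b + d)) /\ distant (cyc a b) (cyc (x*a + c) (x*b + d)).
Proof.
move=> GL; split.
  exists (x*a + c), (x*b + d); split => //; exists a, b.
  have -> : mx2 (x*a + c) (x*b + d) a b = mx2 x 1 1 0 *m mx2 a b c d.
    by rewrite mx2_mul !mul1r !mul0r !addr0.
  exact: inGL2_mul (inGL2_swap_shift x) GL.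
exists a, b, (x*a + c), (x*b + d); do 2!split => //.
have -> : mx2 a b (x*a + c) (x*b + d) = mx2 1 0 x 1 *m mx2 a b c d.
  by rewrite mx2_mul !mul1r !mul0r !addr0 ?add0r.
exact: inGL2_mul (inGL2_transvection x) GL.
Qed.

Lemma fixed_cyc_eigen (h : vec R -> vec R) (u : vec R) :
  Defs.image h (cyc u.1 u.2) = cyc u.1 u.2 ->
  (exists al, h u = vscale al u) /\ exists r, u = h (vscale r u).
Proof.
case: u => a b /= E; have unit_in : cyc a b (a, b) by exists 1; rewrite /vscale !mul1r.
split.
  have : Defs.image h (cyc a b) (h (a, b)) by exists (a, b).
  by rewrite E.
by move: unit_in; rewrite -E => -[v [[r ->] Ev]]; exists r.
Qed.

Lemma scalar_fixes_cyc (h : vec R -> vec R) al r0 :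
  al * r0 = 1 -> (forall v, h v = vscale al v) -> forall a b, Defs.image h (cyc a b) = cyc a b.
Proof.
move=> al_r0 hv a b; apply: functional_extensionality => w.
apply: propositional_extensionality; split.
  by case=> v [[r ->] ->]; rewrite hv; exists (al * r); rewrite /vscale /= !mulrA.
case=> s ->; exists (vscale (r0 * s) (a, b)); split; first by exists (r0 * s).
by rewrite hv /vscale /= !mulrA al_r0 !mul1r.
Qed.

Section FixedNeighbours.
Variables a b c d : R.
Hypothesis rows_free : forall s t, s*a + t*c = 0 -> s*b + t*d = 0 -> s = 0 /\ t = 0.
Hypothesis rows_span : forall v : vec R, exists s t, v = comb a b c d s t.

Variable h : vec R -> vec R.
Variable z : R -> R.
Hypothesis h_add : forall u v, h (vadd u v) = vadd (h u) (h v).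
Hypothesis h_semilinear : forall r v, h (vscale r v) = vscale (z r) (h v).
Hypothesis z1 : z 1 = 1.

Local Notation lin := (comb a b c d).

Lemma lin_inj s t s' t' : lin s t = lin s' t' -> s = s' /\ t = t'.
Proof.
case=> E1 E2; have [H1 H2] : s - s' = 0 /\ t - t' = 0.
  by apply: rows_free; rewrite !mulrBl addrACA -opprD ?E1 ?E2 subrr.
by split; apply/eqP; rewrite -subr_eq0 ?H1 ?H2.
Qed.

Lemma fixed_neighbours_scalar :
  Defs.image h (cyc a b) = cyc a b ->
  (forall x, Defs.image h (cyc (x*a + c) (x*b + d)) = cyc (x*a + c) (x*b + d)) ->
  exists al r0, al * r0 = 1 /\ forall v, h v = vscale al v.
Proof.
move=> fix_base fix_nb.
have fix_lin x : Defs.image h (cyc (lin x 1).1 (lin x 1).2) = cyc (lin x 1).1 (lin x 1).2.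
  by rewrite /= !mul1r; exact: fix_nb.
have [[al Hal] [r0 Hr0]] : (exists al, h (lin 1 0) = vscale al (lin 1 0)) /\
                           exists r, lin 1 0 = h (vscale r (lin 1 0)).
  by apply: fixed_cyc_eigen; rewrite /= !mul1r !mul0r !addr0.
have [[be Hbe] _] := fixed_cyc_eigen (fix_lin 0).
have h_lin s t : h (lin s t) = lin (z s * al) (z t * be).
  have -> : lin s t = vadd (vscale s (lin 1 0)) (vscale t (lin 0 1)).
    by rewrite !vscale_comb vadd_comb !mulr1 !mulr0 addr0 add0r.
  by rewrite h_add !h_semilinear Hal Hbe !vscale_comb vadd_comb !mulr0 addr0 add0r !mulrA !mulr1.
(* Comparing with the eigenvalue on (x a + c, x b + d) gives z x al = be x. *)
have z_twist x : z x * al = be * x.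
  have [[de Hde] _] := fixed_cyc_eigen (fix_lin x).
  by move: Hde; rewrite h_lin vscale_comb mulr1 z1 mul1r => /lin_inj[-> ->].
have al_be : al = be by have := z_twist 1; rewrite z1 mul1r mulr1.
have h_scalar v : h v = vscale al v.
  by have [s [t ->]] := rows_span v; rewrite h_lin vscale_comb -al_be !z_twist al_be.
exists al, r0; split => //.
by move: Hr0; rewrite h_scalar !vscale_comb mulr0 mulr1 => /lin_inj[].
Qed.

End FixedNeighbours.

Lemma image_comp (f g : vec R -> vec R) p :
  Defs.image (g \o f) p = Defs.image g (Defs.image f p).
Proof.
apply: functional_extensionality => w; apply: propositional_extensionality; split.
  by case=> v [pv ->]; exists (f v); split => //; exists v.
by case=> u [[v [pv ->]] ->]; exists v.
Qed.

Lemma image_cancel (f g : vec R -> vec R) p :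
  cancel f g -> Defs.image g (Defs.image f p) = p.
Proof.
move=> fK; apply: functional_extensionality => w; apply: propositional_extensionality; split.
  by case=> u [[v [pv ->]] ->]; rewrite fK.
by move=> pw; exists (f w); split; [exists w | rewrite fK].
Qed.

Lemma image_eq_iff_fixed (f1 f2 k2 : vec R -> vec R) p :
  cancel f2 k2 -> cancel k2 f2 ->
  Defs.image f1 p = Defs.image f2 p <-> Defs.image (k2 \o f1) p = p.
Proof.
move=> f2K k2K; rewrite image_comp; split => [->|E]; first exact: image_cancel.
by rewrite -{2}E image_cancel.
Qed.

Lemma semilinear_comp_inv (f1 f2 k2 : vec R -> vec R) (z1 z2 z2' : R -> R) :
  cancel f2 k2 -> cancel k2 f2 -> cancel z2' z2 ->
  (forall u v, f1 (vadd u v) = vadd (f1 u) (f1 v)) ->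
  (forall r v, f1 (vscale r v) = vscale (z1 r) (f1 v)) ->
  (forall u v, f2 (vadd u v) = vadd (f2 u) (f2 v)) ->
  (forall r v, f2 (vscale r v) = vscale (z2 r) (f2 v)) ->
  (forall u v, (k2 \o f1) (vadd u v) = vadd ((k2 \o f1) u) ((k2 \o f1) v)) /\
  (forall r v, (k2 \o f1) (vscale r v) = vscale ((z2' \o z1) r) ((k2 \o f1) v)).
Proof.
move=> f2K k2K z2'K f1_add f1_scale f2_add f2_scale; split=> [u v | r v] /=.
  by rewrite f1_add -{1}(k2K (f1 u)) -{1}(k2K (f1 v)) -f2_add f2K.
by rewrite f1_scale -{1}(k2K (f1 v)) -{1}(z2'K (z1 r)) -f2_scale f2K.
Qed.

End ProjectiveLine.

Theorem mainTheorem5 (R : pzRingType) (g1 g2 : vset R -> vset R)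
  (f1 f2 : vec R -> vec R) (C : vset R -> Prop) :
  bij_points g1 -> bij_points g2 ->
  semilinear_bij f1 -> induced_by g1 f1 ->
  semilinear_bij f2 -> induced_by g2 f2 ->
  is_component C ->
  (forall p, C p -> g1 p = g2 p) ->
  forall p, is_point p -> g1 p = g2 p.
Proof.
move=> _ _ [_ [f1_add [z1 [[_ [_ [_ z1_1]]] f1_scale]]]] ind1
  [[k2 f2K k2K] [f2_add [z2 [[[z2' z2K z2'K] [_ [_ z2_1]]] f2_scale]]]] ind2
  [p0 [pt0 C_conn]] agree.
have [h_add h_scale] := semilinear_comp_inv f2K k2K z2'K f1_add f1_scale f2_add f2_scale.
have z_1 : (z2' \o z1) 1 = 1 by rewrite /= z1_1 -{1}z2_1 z2K.
have agree_iff q : is_point q -> g1 q = g2 q <-> Defs.image (k2 \o f1) q = q.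
  by move=> pt_q; rewrite ind1 // ind2 //; exact: image_eq_iff_fixed.
have fixed_in_C q : is_point q -> connected p0 q -> Defs.image (k2 \o f1) q = q.
  by move=> pt_q conn_q; apply/agree_iff => //; apply/agree/C_conn.
have [a [b [[c [d GL]] p0_def]]] := pt0.
have [rows_free rows_span] := inGL2_rows_basis GL.
have [al [r0 [al_r0 h_scalar]]] :
    exists al r0, al * r0 = 1 /\ forall v, (k2 \o f1) v = vscale al v.
  apply: (fixed_neighbours_scalar rows_free rows_span h_add h_scale z_1) => [|x].
    by rewrite -p0_def; apply: fixed_in_C => //; exact: conn_refl.
  have [pt_x dist_x] := neighbour_point x GL.
  apply: fixed_in_C => //; apply: conn_step pt_x _; first exact: conn_refl.
  by rewrite p0_def.
move=> p [p1 [p2 [adm ->]]]; apply/agree_iff; first by exists p1, p2.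
exact: scalar_fixes_cyc al_r0 h_scalar p1 p2.
Qed.
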